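(* For any covector $p_a$ at a point, the adjugate (classical adjoint) $A_b{}^a$ of the linear map $\mathcal{M}_b{}^d$ is $$A_b{}^a=-8\mathcal{L}_F\big(M(p_cp^c)^2+N\,p_cp^c\,u_du^d+P(u_du^d)^2\big)\,p_bp^a .$$ Consequently, $\mathcal{M}_b{}^d$ has a kernel of dimension at least two if and only if $\mathcal{L}_F\big(M(p_cp^c)^2+Np_cp^cu_du^d+P(u_du^d)^2\big)=0$; if $\mathcal{L}_F\neq0$ and $M\neq0$ this is equivalent to $(\tilde g_+^{bc}p_bp_c)(\tilde g_-^{de}p_dp_e)=0$.
   Context: Let $F_{ab}$ be an antisymmetric tensor on an oriented 4-dimensional Lorentzian manifold with metric $g_{ab}$ (signature $(-,+,+,+)$; indices moved with $g$), $\varepsilon_{abcd}$ the volume form, ${}^{*}F_{ab}=\frac12\varepsilon_{abcd}F^{cd}$, $F=\frac12F_{ab}F^{ab}$, $G=-\frac14F_{ab}{}^{*}F^{ab}$. Let $\mathcal{L}(F,G)$ be smooth with partial derivatives $\mathcal{L}_F,\mathcal{L}_{FF},\mathcal{L}_{FG},\mathcal{L}_{GG}$ evaluated at the background invariants. $P=\mathcal{L}_{FF}\mathcal{L}_{GG}-\mathcal{L}_{FG}^2$, $M=\mathcal{L}_F^2+2\mathcal{L}_F\mathcal{L}_{FG}G-\frac12\mathcal{L}_F\mathcal{L}_{GG}F-PG^2$, $N=2\mathcal{L}_F\mathcal{L}_{FF}+\frac12\mathcal{L}_F\mathcal{L}_{GG}-PF$, $\sigma_\pm=\frac{N}{2M}\pm\sqrt{\frac{N^2}{4M^2}-\frac{P}{M}}$,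 optical metrics $\tilde g_\pm^{bc}=g^{bc}+\sigma_\pm F^{bd}F^{c}{}_{d}$. For a covector $p_a$ put $u_a=F_{ab}p^b$, $v_a={}^{*}F_{ab}p^b$ and $\mathcal{M}_b{}^d=-2\mathcal{L}_Fp_ap^a\delta_b^d+2\mathcal{L}_Fp_bp^d-4\mathcal{L}_{FF}u_bu^d+2\mathcal{L}_{FG}(u_bv^d+v_bu^d)-\mathcal{L}_{GG}v_bv^d$. *)

(* Pointwise (tangent-space) algebra at one point of the
   4-dimensional Lorentzian manifold, in an arbitrary coordinate basis.
   Scalars live in a numClosedFieldType C (e.g. algC); all given data are
   required to be real, but sigma_pm (which contains a square root of a
   possibly negative discriminant) may be complex, as in the paper. *)
From HB Require Import structures.
From mathcomp Require Import all_boot all_order all_algebra.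
Set Implicit Arguments. Unset Strict Implicit. Unset Printing Implicit Defensive.
Import Order.TTheory GRing.Theory Num.Theory.
Local Open Scope ring_scope.

Section Defs.
Variable C : numClosedFieldType.
Local Notation M4 := 'M[C]_4.

Definition eta4 : M4 := \matrix_(i < 4, j < 4)
  (if i == j then (if i == 0 :> nat then -1 else 1) else 0).

Definition ginv (g : M4) : M4 := invmx g.

(* Levi-Civita symbol [abcd] (sign of the permutation, 0 if indices repeat) *)
Definition levi (a b c d : 'I_4) : C :=
  \det (\matrix_(i < 4, j < 4) ((tnth [tuple a; b; c; d] i == j)%:R : C)).

(* volume form eps_{abcd}, for an oriented orthonormal frame E
   (columns E_{.mu} = e_mu^a, with E^T g E = eta): eps(e_0,e_1,e_2,e_3)=1 *)
Definition eps (E : M4) (a b c d : 'I_4) : C := levi a b c d / \det E.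

Definition Fup (g F : M4) (a b : 'I_4) : C :=
  \sum_(c < 4) \sum_(d < 4) ginv g a c * ginv g b d * F c d.

Definition Fdual (g E F : M4) (a b : 'I_4) : C :=
  2^-1 * \sum_(c < 4) \sum_(d < 4) eps E a b c d * Fup g F c d.

Definition Fdualup (g E F : M4) (a b : 'I_4) : C :=
  \sum_(c < 4) \sum_(d < 4) ginv g a c * ginv g b d * Fdual g E F c d.

Definition Finv (g F : M4) : C :=
  2^-1 * \sum_(a < 4) \sum_(b < 4) F a b * Fup g F a b.
Definition Ginv (g E F : M4) : C :=
  - 4^-1 * \sum_(a < 4) \sum_(b < 4) F a b * Fdualup g E F a b.

Definition Pc (LFF LFG LGG : C) : C := LFF * LGG - LFG ^+ 2.
Definition Mc (LF LFF LFG LGG Fv Gv : C) : C :=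
  LF ^+ 2 + 2 * LF * LFG * Gv - 2^-1 * LF * LGG * Fv
  - Pc LFF LFG LGG * Gv ^+ 2.
Definition Nc (LF LFF LFG LGG Fv : C) : C :=
  2 * LF * LFF + 2^-1 * LF * LGG - Pc LFF LFG LGG * Fv.

Definition sigma (plus : bool) (M N P : C) : C :=
  N / (2 * M) + (if plus then 1 else -1) *
    sqrtC (N ^+ 2 / (4 * M ^+ 2) - P / M).

Definition raise (g : M4) (p : 'I_4 -> C) (a : 'I_4) : C :=
  \sum_(b < 4) ginv g a b * p b.

Definition dot (g : M4) (X Y : 'I_4 -> C) : C :=
  \sum_(a < 4) X a * raise g Y a.

Definition uvec (g F : M4) (p : 'I_4 -> C) (a : 'I_4) : C :=
  \sum_(b < 4) F a b * raise g p b.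
Definition vvec (g E F : M4) (p : 'I_4 -> C) (a : 'I_4) : C :=
  \sum_(b < 4) Fdual g E F a b * raise g p b.

(* the matrix M_b^d  (row index b, column index d) *)
Definition Mmat (g E F : M4) (LF LFF LFG LGG : C) (p : 'I_4 -> C) : M4 :=
  let u := uvec g F p in let v := vvec g E F p in
  let pu := raise g p in let uu := raise g u in let vu := raise g v in
  \matrix_(b < 4, d < 4)
    (- 2 * LF * dot g p p * (b == d)%:R + 2 * LF * p b * pu d
     - 4 * LFF * u b * uu d + 2 * LFG * (u b * vu d + v b * uu d)
     - LGG * v b * vu d).

Definition optical (g F : M4) (sig : C) (p : 'I_4 -> C) : C :=
  \sum_(b < 4) \sum_(c < 4)
    (ginv g b c + sig * \sum_(d < 4) Fup g F b d *
        (\sum_(e < 4) Fup g F c e * g e d)) * p b * p c.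

End Defs.

From HB Require Import structures.
From mathcomp Require Import all_boot all_order all_algebra perm.
From mathcomp.algebra_tactics Require Import ring.
Set Implicit Arguments. Unset Strict Implicit. Unset Printing Implicit Defensive.
Import Order.TTheory GRing.Theory Num.Theory.
Local Open Scope ring_scope.

(* In an orthonormal frame E of g (E^T g E = eta) the inverse metric is
   E eta E^T, so M is conjugate by E^T to the same operator built from eta, the
   frame components X = E^T F E, q = E^T p, and the Minkowski Hodge dual of X:
   the Levi-Civita symbol contracted with four copies of E picks up det E, which
   cancels the factor 1/det E in eps.  Adjugates commute with conjugation, so the
   adjugate formula becomes a polynomial identity in the six components of X and
   the four of q, checked entry by entry.  A 4x4 matrix has zero adjugate iff its
   rank is at most 2, which gives the statement on the kernel; and since
   gtilde_pm(p, p) = p.p + sigma_pm u.u, the product of the two optical norms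
   is Q / M by Vieta's formulas. *)

Local Notation col x := (\col_(a < 4) x a).

Section Sums.
Variable R : comNzRingType.

Lemma sum_delta n (x : 'I_n) (W : 'I_n -> R) : \sum_a (a == x)%:R * W a = W x.
Proof. by rewrite (bigD1 x) //= eqxx mul1r big1 ?addr0 // => a /negPf ->; rewrite mul0r. Qed.

Lemma sum2_delta n (x y : 'I_n) (W : 'I_n -> 'I_n -> R) :
  \sum_a \sum_b (a == x)%:R * (b == y)%:R * W a b = W x y.
Proof.
under eq_bigr => a _ do under eq_bigr => b _ do rewrite -mulrA.
by under eq_bigr => a _ do rewrite -big_distrr /= sum_delta; rewrite sum_delta.
Qed.

Lemma sum2_mulr_sum (I J K : finType) (F : I -> J -> R) (G : I -> J -> K -> R) :
  \sum_i \sum_j F i j * (\sum_k G i j k) = \sum_k \sum_i \sum_j F i j * G i j k.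
Proof.
under eq_bigr => i _ do under eq_bigr => j _ do rewrite big_distrr.
by under eq_bigr => i _ do rewrite exchange_big; rewrite exchange_big.
Qed.

Lemma sum2_mulr_sum2 (I J K L : finType) (F : I -> J -> R) (G : I -> J -> K -> L -> R) :
  \sum_i \sum_j F i j * (\sum_k \sum_l G i j k l)
  = \sum_k \sum_l \sum_i \sum_j F i j * G i j k l.
Proof.
transitivity (\sum_i \sum_j \sum_k \sum_l F i j * G i j k l).
  apply: eq_bigr => i _; apply: eq_bigr => j _; rewrite big_distrr /=.
  by apply: eq_bigr => k _; rewrite big_distrr.
under eq_bigr => i _ do rewrite exchange_big.
rewrite exchange_big; apply: eq_bigr => k _.
by under eq_bigr => i _ do rewrite exchange_big; rewrite exchange_big.
Qed.

Lemma mulmx_conjE n (E Y : 'M[R]_n) c d :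
  (E *m Y *m E^T) c d = \sum_g \sum_e E c g * E d e * Y g e.
Proof.
rewrite mxE exchange_big; apply: eq_bigr => e _.
rewrite [in LHS]mxE [E^T _ _]mxE big_distrl.
by apply: eq_bigr => g _; rewrite /= mulrAC.
Qed.

Lemma sum_mul_tr n (A B : 'M[R]_n) : \sum_a \sum_b A a b * B a b = \tr (A^T *m B).
Proof.
rewrite /mxtrace exchange_big; apply: eq_bigr => b _; rewrite mxE.
by apply: eq_bigr => a _; rewrite mxE.
Qed.

Lemma quad_form n (A : 'M[R]_n) (x : 'I_n -> R) :
  \sum_b \sum_c A b c * x b * x c = ((\col_a x a)^T *m (A *m \col_a x a)) 0 0.
Proof.
rewrite mxE; apply: eq_bigr => b _; rewrite !mxE big_distrr.
by apply: eq_bigr => c _; rewrite !mxE /=; ring.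
Qed.

End Sums.

Lemma big_ord4 (R : Type) (idx : R) (op : Monoid.law idx) (F : 'I_4 -> R) :
  \big[op/idx]_(i < 4) F i = op (op (op (F 0) (F 1)) (F 2)) (F 3).
Proof.
rewrite !big_ord_recr big_ord0 Monoid.mul1m.
by congr (op (op (op (F _) (F _)) (F _)) (F _)); apply: val_inj.
Qed.

(** * Determinants and adjugates *)

Section SmallDeterminants.
Variable R : comNzRingType.

Definition sarrus (f : nat -> nat -> R) : R :=
  f 0 0 * (f 1 1 * f 2 2 - f 1 2 * f 2 1)
  - f 0 1 * (f 1 0 * f 2 2 - f 1 2 * f 2 0)
  + f 0 2 * (f 1 0 * f 2 1 - f 1 1 * f 2 0).

Lemma det_mx22 (f : nat -> nat -> R) :
  \det (\matrix_(i < 2, j < 2) f i j) = f 0 0 * f 1 1 - f 0 1 * f 1 0.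
Proof.
rewrite (expand_det_row _ ord0) !big_ord_recr big_ord0 /= add0r /cofactor.
by rewrite !det_mx11 !mxE /= expr0 expr1; ring.
Qed.

Lemma minor_mx n (f : nat -> nat -> R) (i0 j0 : 'I_n.+1) :
  row' i0 (col' j0 (\matrix_(i < n.+1, j < n.+1) f i j))
  = \matrix_(i < n, j < n) f (bump i0 i) (bump j0 j).
Proof. by apply/matrixP => i j; rewrite !mxE. Qed.

Lemma det_mx33 (f : nat -> nat -> R) : \det (\matrix_(i < 3, j < 3) f i j) = sarrus f.
Proof.
rewrite (expand_det_row _ ord0) !big_ord_recr big_ord0 /= add0r /cofactor.
have minor (j : 'I_3) : \det (row' ord0 (col' j (\matrix_(i < 3, j < 3) f i j)))
    = f 1 (bump j 0) * f 2 (bump j 1) - f 1 (bump j 1) * f 2 (bump j 0).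
  by rewrite minor_mx (det_mx22 (fun x y => f (bump 0 x) (bump j y))).
by rewrite !minor !mxE /bump /= !expr0 /sarrus; ring.
Qed.

Lemma det_mx44 (f : nat -> nat -> R) :
  let minor j := sarrus (fun x y => f (bump 0 x) (bump j y)) in
  \det (\matrix_(i < 4, j < 4) f i j)
  = f 0 0 * minor 0 - f 0 1 * minor 1 + f 0 2 * minor 2 - f 0 3 * minor 3.
Proof.
move=> minor; rewrite (expand_det_row _ ord0) !big_ord_recr big_ord0 /= /cofactor.
rewrite !minor_mx !mxE /= !(det_mx33 (fun x y => f (bump 0 x) (bump _ y))) /minor.
by rewrite /bump /= !expr0 !exprS expr0; ring.
Qed.

Lemma adj_mx44 (f : nat -> nat -> R) (b a : 'I_4) :
  \adj (\matrix_(i < 4, j < 4) f i j) b a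
  = (-1) ^+ (a + b) * sarrus (fun i j => f (bump a i) (bump b j)).
Proof.
by rewrite mxE /cofactor minor_mx (det_mx33 (fun x y => f (bump a x) (bump b y))).
Qed.

Lemma pid_mx4E (r : nat) :
  pid_mx r = \matrix_(i < 4, j < 4) ((i == j) && (i < r)%N)%:R :> 'M[R]_4.
Proof. by apply/matrixP => i j; rewrite !mxE. Qed.

Lemma adj_pid_mx4_eq0 (r : nat) : (r <= 2)%N -> \adj (pid_mx r : 'M[R]_4) = 0.
Proof.
move=> small; apply/matrixP => b a.
rewrite pid_mx4E (adj_mx44 (fun x y => ((x == y) && (x < r)%N)%:R)) !mxE /sarrus /bump.
case: r small => [|[|[|//]]] _;
  by case: b a => [[|[|[|[|b]]]] Hb] // [[|[|[|[|a]]]] Ha] //=; ring.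
Qed.

Lemma adj_pid_mx4_max (r : nat) :
  (3 <= r)%N -> \adj (pid_mx r : 'M[R]_4) ord_max ord_max = 1.
Proof.
move=> big.
rewrite pid_mx4E (adj_mx44 (fun x y => ((x == y) && (x < r)%N)%:R)) /sarrus /bump /=.
by case: r big => [|[|[|r]]] //= _; ring.
Qed.

End SmallDeterminants.

Lemma adj_mulmx_det (R : idomainType) n (A B : 'M[R]_n) :
  \det A != 0 -> \det B != 0 -> \adj (A *m B) = \adj B *m \adj A.
Proof.
move=> dA dB; apply/eqP; rewrite -subr_eq0.
have annihilates_AB : (\adj (A *m B) - \adj B *m \adj A) *m (A *m B) = 0.
  rewrite mulmxBl mul_adj_mx det_mulmx mulmxA -[_ *m A]mulmxA mul_adj_mx.
  by rewrite mul_mx_scalar -scalemxAl mul_adj_mx scale_scalar_mx subrr.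
move/(congr1 (mulmx^~ (\adj (A *m B)))): annihilates_AB.
rewrite mul0mx -mulmxA mul_mx_adj mul_mx_scalar => /eqP.
by rewrite scalemx_eq0 det_mulmx mulf_eq0 (negbTE dA) (negbTE dB).
Qed.

(* Characteristic matrices have monic, hence nonzero, determinants, and
   evaluating them at 0 recovers arbitrary matrices. *)
Lemma adj_mulmx (R : idomainType) n (A B : 'M[R]_n) :
  \adj (A *m B) = \adj B *m \adj A.
Proof.
have det_char_neq0 (M : 'M[R]_n) : \det (char_poly_mx (- M)) != 0.
  exact/monic_neq0/char_poly_monic.
have eval0 (M : 'M[R]_n) : map_mx (horner_eval 0) (char_poly_mx (- M)) = M.
  apply/matrixP => i j; rewrite !mxE /horner_eval !hornerE.
  by case: eqP => _; rewrite ?hornerE /=; ring.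
have := adj_mulmx_det (det_char_neq0 A) (det_char_neq0 B).
move/(congr1 (map_mx (horner_eval 0))).
by rewrite map_mxM !map_mx_adj map_mxM !eval0.
Qed.

Lemma adj_conj (R : fieldType) n (P A : 'M[R]_n) : P \in unitmx ->
  \adj (invmx P *m A *m P) = invmx P *m \adj A *m P.
Proof.
move=> uP; have dP : \det P != 0 by rewrite -unitfE -unitmxE.
have adj_unit (Q : 'M[R]_n) : Q \in unitmx -> \adj Q = \det Q *: invmx Q.
  by move=> uQ; rewrite /invmx uQ scalerA mulfV ?scale1r // -unitfE -unitmxE.
have uP' : invmx P \in unitmx by rewrite unitmx_inv.
rewrite !adj_mulmx (adj_unit P uP) (adj_unit _ uP') invmxK det_inv.
by rewrite -scalemxAl -!scalemxAr scalerA mulfV // scale1r mulmxA.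
Qed.

Lemma adj_eq0_rank (R : fieldType) (A : 'M[R]_4) : (\adj A == 0) = (\rank A <= 2)%N.
Proof.
rewrite -[in LHS](mulmx_ebase A) !adj_mulmx.
have [small | big] := leqP (\rank A) 2.
  by rewrite adj_pid_mx4_eq0 // mul0mx mulmx0 eqxx.
apply/negP => /eqP/(congr1 (fun X => row_ebase A *m X *m col_ebase A)).
rewrite mulmx0 mul0mx !mulmxA mul_mx_adj -!mulmxA mul_adj_mx.
rewrite mul_mx_scalar mul_scalar_mx scalerA => /matrixP/(_ ord_max ord_max).
rewrite mxE adj_pid_mx4_max // mulr1 mxE; apply/eqP.
by rewrite mulf_neq0 // -unitfE -unitmxE ?row_ebase_unit ?col_ebase_unit.
Qed.

Lemma kermx_tr_rank_adj (R : fieldType) (A : 'M[R]_4) :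
  (2 <= \rank (kermx A^T))%N = (\adj A == 0).
Proof.
rewrite mxrank_ker mxrank_tr adj_eq0_rank.
by move: (rank_leq_row A); case: (\rank A) => [|[|[|[|[|r]]]]].
Qed.

Lemma outer_eq0 (R : idomainType) n (x y : 'cV[R]_n) :
  (x *m y^T == 0) = (x == 0) || (y == 0).
Proof.
apply/idP/idP => [/eqP xy0 | /orP[] /eqP ->]; last 2 first.
- by rewrite mul0mx.
- by rewrite trmx0 mulmx0.
apply/norP => -[/matrix0Pn[i [j xi]] /matrix0Pn[k [l yk]]].
move/matrixP: xy0 => /(_ i k); rewrite !mxE big_ord1 !mxE (ord1 j) (ord1 l) in xi yk *.
by move/eqP; rewrite mulf_eq0 (negbTE xi) (negbTE yk).
Qed.

(** * The Minkowski metric and the Levi-Civita symbol *)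

Section LeviCivita.
Variable C : numClosedFieldType.
Local Notation eta := (eta4 C).

Definition sgn4 (k : nat) : C := if k == 0%N then -1 else 1.

Lemma eta4E : eta = \matrix_(i < 4, j < 4) ((i == j :> nat)%:R * sgn4 i).
Proof.
by apply/matrixP => i j; rewrite !mxE /sgn4 val_eqE; case: (i == j); rewrite ?mul1r ?mul0r.
Qed.

Lemma mulmx_eta4 m (A : 'M[C]_(m, 4)) : A *m eta = \matrix_(i, j) (A i j * sgn4 j).
Proof.
apply/matrixP => i j; rewrite eta4E !mxE (bigD1 j) //= big1 ?addr0.
  by rewrite mxE eqxx mul1r.
by move=> k /negPf kj; rewrite mxE val_eqE kj mul0r mulr0.
Qed.

Lemma trmx_eta4 : eta^T = eta.
Proof. by apply/matrixP => i j; rewrite !mxE eq_sym; case: eqP => // ->. Qed.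

Lemma mulmx_eta4_eta4 : eta *m eta = 1%:M.
Proof.
apply/matrixP => i j; rewrite mulmx_eta4 eta4E !mxE /sgn4.
by case: i j => [[|[|[|[|i]]]] Hi] // [[|[|[|[|j]]]] Hj] //=; ring.
Qed.

Lemma det_eta4 : \det eta = -1.
Proof.
rewrite eta4E (det_mx44 (fun x y => (x == y)%:R * sgn4 x)).
by rewrite /sarrus /bump /sgn4 /=; ring.
Qed.

Lemma leviE (a b c d : 'I_4) :
  let t := nth 0%N [:: val a; val b; val c; val d] in
  let minor j := sarrus (fun x y => (t (bump 0 x) == bump j y)%:R : C) in
  levi C a b c d = (t 0 == 0)%:R * minor 0 - (t 0 == 1)%:R * minor 1
                   + (t 0 == 2)%:R * minor 2 - (t 0 == 3)%:R * minor 3.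
Proof.
move=> t minor; rewrite /levi -(det_mx44 (fun x y => (t x == y)%:R)).
by congr (\det _); apply/matrixP => i j; rewrite !mxE; case: i => [[|[|[|[|i]]]] Hi].
Qed.

Lemma leviP (a b c d : 'I_4) : levi C a b c d = \sum_(s : 'S_4) (-1) ^+ s *
    ((a == s 0)%:R * (b == s 1)%:R * (c == s 2)%:R * (d == s 3)%:R).
Proof. by apply: eq_bigr => s _; rewrite big_ord4 !mxE. Qed.

Lemma levi_swap (a b c d : 'I_4) : levi C b a c d = - levi C a b c d.
Proof.
rewrite !leviP (reindex_inj (mulgI (tperm 0 1))) -sumrN; apply: eq_bigr => s _.
rewrite odd_permM odd_tperm signr_addb !permM tpermL tpermR !tpermD //.
by rewrite (_ : (0 : 'I_4) != 1) // expr1; move: ((-1) ^+ s : C) => sg; ring.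
Qed.

Lemma levi_mulmx4 (E : 'M[C]_4) t0 t1 t2 t3 :
  \sum_a \sum_b E a t0 * E b t1 * (\sum_c \sum_d E c t2 * E d t3 * levi C a b c d)
  = \det E * levi C t0 t1 t2 t3.
Proof.
have -> : \det E * levi C t0 t1 t2 t3 = \sum_(s : 'S_4) (-1) ^+ s *
    (E (s 0) t0 * E (s 1) t1 * E (s 2) t2 * E (s 3) t3).
  rewrite mulrC -det_tr /levi -det_mulmx; apply: eq_bigr => s _; congr (_ * _).
  rewrite big_ord4; congr (_ * _ * _ * _); rewrite mxE;
    under eq_bigr => k _ do rewrite !mxE eq_sym; exact: sum_delta.
under eq_bigr => a _ do under eq_bigr => b _ do under eq_bigr => c _ do
  under eq_bigr => d _ do rewrite leviP.
under eq_bigr => a _ do under eq_bigr => b _ do rewrite sum2_mulr_sum big_distrr.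
under eq_bigr => a _ do rewrite exchange_big.
rewrite exchange_big; apply: eq_bigr => s _ /=; move: ((-1) ^+ s : C) => sg.
transitivity (\sum_a \sum_b (a == s 0)%:R * (b == s 1)%:R *
  (sg * E a t0 * E b t1 * E (s 2) t2 * E (s 3) t3)); last first.
  by rewrite sum2_delta; ring.
apply: eq_bigr => a _; apply: eq_bigr => b _.
transitivity (E a t0 * E b t1 * \sum_c \sum_d (c == s 2)%:R * (d == s 3)%:R *
  (sg * (a == s 0)%:R * (b == s 1)%:R * E c t2 * E d t3)).
  by congr (_ * _); apply: eq_bigr => c _; apply: eq_bigr => d _; ring.
by rewrite sum2_delta; ring.
Qed.

Definition levi_dual (Y : 'M[C]_4) : 'M[C]_4 :=
  \matrix_(a, b) (2^-1 * \sum_c \sum_d levi C a b c d * Y c d).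

Lemma levi_dual_anti (Y : 'M[C]_4) : (levi_dual Y)^T = - levi_dual Y.
Proof.
apply/matrixP => a b; rewrite !mxE -mulrN -sumrN; congr (_ * _).
by apply: eq_bigr => c _; rewrite -sumrN; apply: eq_bigr => d _; rewrite levi_swap mulNr.
Qed.

Lemma levi_dual_conj (E Y : 'M[C]_4) :
  E^T *m levi_dual (E *m Y *m E^T) *m E = \det E *: levi_dual Y.
Proof.
have dual_conjE a b : levi_dual (E *m Y *m E^T) a b
    = 2^-1 * \sum_g \sum_e Y g e * (\sum_c \sum_d E c g * E d e * levi C a b c d).
  rewrite mxE; congr (_ * _); under eq_bigr => c _ do under eq_bigr => d _ do
    rewrite mulmx_conjE.
  rewrite sum2_mulr_sum2; apply: eq_bigr => g _; apply: eq_bigr => e _.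
  rewrite big_distrr; apply: eq_bigr => c _; rewrite big_distrr.
  by apply: eq_bigr => d _ /=; ring.
apply/matrixP => al be; rewrite mxE [RHS]mxE [levi_dual Y _ _]mxE.
transitivity (2^-1 * \sum_g \sum_e Y g e *
  (\sum_a \sum_b E a al * E b be * (\sum_c \sum_d E c g * E d e * levi C a b c d))).
  under eq_bigr => b _ do rewrite mxE big_distrl /=.
  rewrite exchange_big /=.
  transitivity (\sum_a \sum_b (2^-1 * E a al * E b be) * \sum_g \sum_e
    Y g e * (\sum_c \sum_d E c g * E d e * levi C a b c d)).
    by apply: eq_bigr => a _; apply: eq_bigr => b _; rewrite mxE dual_conjE; ring.
  rewrite sum2_mulr_sum2 big_distrr; apply: eq_bigr => g _ /=.
  rewrite big_distrr; apply: eq_bigr => e _ /=; rewrite mulrA big_distrr.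
  apply: eq_bigr => a _ /=; rewrite big_distrr; apply: eq_bigr => b _ /=; ring.
under eq_bigr => g _ do under eq_bigr => e _ do rewrite levi_mulmx4.
rewrite [RHS]mulrCA; congr (_ * _); rewrite big_distrr; apply: eq_bigr => g _ /=.
by rewrite big_distrr; apply: eq_bigr => e _ /=; ring.
Qed.

End LeviCivita.

(** * The operator M *)

Section Symbol.
Variables (C : numClosedFieldType) (LF LFF LFG LGG : C).

Definition Mcal_outer (p u v : 'cV[C]_4) : 'M[C]_4 :=
  (2 * LF) *: (p *m p^T) - (4 * LFF) *: (u *m u^T)
  + (2 * LFG) *: (u *m v^T + v *m u^T) - LGG *: (v *m v^T).

(* The matrix M_b^d of the paper for the inverse metric h, with p_b, u_b, v_b
   as columns and pp standing for p_c p^c. *)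
Definition Mcal (h : 'M[C]_4) (pp : C) (p u v : 'cV[C]_4) : 'M[C]_4 :=
  (- 2 * LF * pp) *: 1%:M + Mcal_outer p u v *m h.

Definition Qc (Fv Gv pp uu : C) : C :=
  Mc LF LFF LFG LGG Fv Gv * pp ^+ 2 + Nc LF LFF LFG LGG Fv * pp * uu
  + Pc LFF LFG LGG * uu ^+ 2.

Lemma Mcal_outer_conj (P : 'M[C]_4) (p u v : 'cV[C]_4) :
  Mcal_outer (P^T *m p) (P^T *m u) (P^T *m v) = P^T *m Mcal_outer p u v *m P.
Proof.
have conj_outer (x y : 'cV[C]_4) : (P^T *m x) *m (P^T *m y)^T = P^T *m (x *m y^T) *m P.
  by rewrite trmx_mul trmxK !mulmxA.
rewrite /Mcal_outer !conj_outer.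
rewrite !(mulmxDl, mulmxBl, mulmxDr, mulmxBr) !mulmxN !mulNmx -!scalemxAr -!scalemxAl.
by rewrite mulmxDr mulmxDl.
Qed.

Lemma Mcal_conj (P K : 'M[C]_4) pp (p u v : 'cV[C]_4) : P^T \in unitmx ->
  Mcal (P *m K *m P^T) pp p u v
  = invmx P^T *m Mcal K pp (P^T *m p) (P^T *m u) (P^T *m v) *m P^T.
Proof.
move=> P_unit; rewrite /Mcal Mcal_outer_conj mulmxDr mulmxDl -scalemxAr mulmx1.
by rewrite -scalemxAl mulVmx // !mulmxA mulVmx // mul1mx.
Qed.

End Symbol.

(** * The adjugate in a Minkowski frame *)

Section MinkowskiFrame.
Variable C : numClosedFieldType.
Local Notation eta := (eta4 C).

Definition hodge (X : 'M[C]_4) : 'M[C]_4 := levi_dual (eta *m X *m eta).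

Definition vec4 (x : seq C) : 'cV[C]_4 := \col_(i < 4) x`_i.

Definition asym4 (f01 f02 f03 f12 f13 f23 : C) : 'M[C]_4 :=
  \matrix_(i < 4, j < 4) (nth [::] [:: [:: 0; f01; f02; f03]; [:: - f01; 0; f12; f13];
                                     [:: - f02; - f12; 0; f23]; [:: - f03; - f13; - f23; 0]] i)`_j.

Lemma col_vec4 (q : 'cV[C]_4) : q = vec4 [:: q 0 0; q 1 0; q 2 0; q 3 0].
Proof.
apply/matrixP => i j; rewrite (ord1 j) mxE.
by case: i => [[|[|[|[|i]]]] Hi] //=; congr (q _ _); apply: val_inj.
Qed.

Lemma asym4_entries (X : 'M[C]_4) : X^T = - X ->
  X = asym4 (X 0 1) (X 0 2) (X 0 3) (X 1 2) (X 1 3) (X 2 3).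
Proof.
move=> /matrixP X_anti.
have anti i j : X i j = - X j i by have := X_anti j i; rewrite !mxE.
have diag i j : val i = val j -> X i j = 0.
  move=> /val_inj <-; apply/eqP; rewrite -[_ == 0](mulrn_eq0 _ 2) mulr2n.
  by rewrite {1}anti addNr.
apply/matrixP => i j; rewrite mxE.
case: i j => [[|[|[|[|i]]]] Hi] // [[|[|[|[|j]]]] Hj] //=;
  first [ by rewrite diag | by congr (X _ _); apply: val_inj
        | by rewrite anti; congr (- X _ _); apply: val_inj ].
Qed.

Lemma vec4_eta_form (x y : seq C) :
  ((vec4 x)^T *m (eta *m vec4 y)) 0 0
  = - x`_0 * y`_0 + x`_1 * y`_1 + x`_2 * y`_2 + x`_3 * y`_3.
Proof.
rewrite mxE eta4E !big_ord_recr !big_ord0 /= !mxE.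
by rewrite !big_ord_recr !big_ord0 /= !mxE /sgn4 /=; ring.
Qed.

Lemma asym4_eta_vec4 f01 f02 f03 f12 f13 f23 (q : seq C) :
  asym4 f01 f02 f03 f12 f13 f23 *m eta *m vec4 q
  = vec4 [:: f01 * q`_1 + f02 * q`_2 + f03 * q`_3; f01 * q`_0 + f12 * q`_2 + f13 * q`_3;
             f02 * q`_0 - f12 * q`_1 + f23 * q`_3; f03 * q`_0 - f13 * q`_1 - f23 * q`_2].
Proof.
apply/matrixP => i j; rewrite (ord1 j) mulmx_eta4 !mxE !big_ord_recr !big_ord0 /= !mxE.
by case: i => [[|[|[|[|i]]]] Hi] //=; rewrite /sgn4 /=; ring.
Qed.

Lemma trace_asym4 f01 f02 f03 f12 f13 f23 g01 g02 g03 g12 g13 g23 :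
  \tr ((asym4 f01 f02 f03 f12 f13 f23)^T *m
       (eta *m asym4 g01 g02 g03 g12 g13 g23 *m eta))
  = 2 * (- (f01 * g01 + f02 * g02 + f03 * g03) + f12 * g12 + f13 * g13 + f23 * g23).
Proof.
rewrite mulmx_eta4 eta4E /mxtrace !big_ord_recr !big_ord0 /= !mxE.
rewrite !big_ord_recr !big_ord0 /= !mxE !big_ord_recr !big_ord0 /= !mxE /sgn4 /=; ring.
Qed.

Lemma eta_asym4_eta f01 f02 f03 f12 f13 f23 :
  eta *m asym4 f01 f02 f03 f12 f13 f23 *m eta = asym4 (- f01) (- f02) (- f03) f12 f13 f23.
Proof.
apply/matrixP => i j; rewrite mulmx_eta4 eta4E !mxE !big_ord_recr !big_ord0 /= !mxE.
by case: i j => [[|[|[|[|i]]]] Hi] // [[|[|[|[|j]]]] Hj] //=; rewrite /sgn4 /=; ring.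
Qed.

(* Both sides are antisymmetric, so only the six entries above the diagonal
   have to be computed. *)
Lemma levi_dual_asym4 g01 g02 g03 g12 g13 g23 :
  levi_dual (asym4 g01 g02 g03 g12 g13 g23) = asym4 g23 (- g13) g12 g03 (- g02) g01.
Proof.
have two : (2 : C) != 0 by rewrite pnatr_eq0.
rewrite [LHS](asym4_entries (levi_dual_anti _)).
by congr asym4; rewrite mxE !big_ord_recr !big_ord0 /= !mxE !leviE /sarrus /bump /=; field.
Qed.

Lemma hodge_asym4 f01 f02 f03 f12 f13 f23 :
  hodge (asym4 f01 f02 f03 f12 f13 f23) = asym4 f23 (- f13) f12 (- f03) f02 (- f01).
Proof. by rewrite /hodge eta_asym4_eta levi_dual_asym4 opprK. Qed.

Section FrameSymbol.
Variables LF LFF LFG LGG : C.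
Local Notation Mcal := (Mcal LF LFF LFG LGG).

(* Entries indexed by nat, the form in which [adj_mx44] applies. *)
Definition Mcal_entry (pp : C) (p u v : seq C) (b d : nat) : C :=
  - 2 * LF * pp * (b == d)%:R
  + (2 * LF * p`_b * p`_d - 4 * LFF * u`_b * u`_d
     + 2 * LFG * (u`_b * v`_d + v`_b * u`_d) - LGG * v`_b * v`_d) * sgn4 C d.

Lemma Mcal_eta_vec4 pp (p u v : seq C) :
  Mcal eta pp (vec4 p) (vec4 u) (vec4 v) = \matrix_(b, d) Mcal_entry pp p u v b d.
Proof.
apply/matrixP => b d; rewrite /Mcal /Mcal_outer mulmx_eta4 !mxE !big_ord1 !mxE.
by rewrite /Mcal_entry -val_eqE; ring.
Qed.

Lemma adj_Mcal_frame f01 f02 f03 f12 f13 f23 q0 q1 q2 q3 :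
  let X := asym4 f01 f02 f03 f12 f13 f23 in
  let q := vec4 [:: q0; q1; q2; q3] in
  let u := X *m eta *m q in
  let v := hodge X *m eta *m q in
  let pp := (q^T *m (eta *m q)) 0 0 in
  let uu := (u^T *m (eta *m u)) 0 0 in
  \adj (Mcal eta pp q u v)
  = (- 8 * LF * Qc LF LFF LFG LGG (2^-1 * \tr (X^T *m (eta *m X *m eta)))
                  (- 4^-1 * \tr (X^T *m (eta *m hodge X *m eta))) pp uu)
    *: (q *m (eta *m q)^T).
Proof.
have two : (2 : C) != 0 by rewrite pnatr_eq0.
rewrite /= hodge_asym4 !asym4_eta_vec4 !vec4_eta_form !trace_asym4 Mcal_eta_vec4.
apply/matrixP => b a; rewrite adj_mx44 mxE trmx_mul trmx_eta4 mulmxA mulmx_eta4.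
rewrite !mxE big_ord1 !mxE.
case: b a => [[|[|[|[|b]]]] Hb] // [[|[|[|[|a]]]] Ha] //;
  by rewrite /= /sarrus /bump /Mcal_entry /Qc /Mc /Nc /Pc /sgn4 /=; field.
Qed.

End FrameSymbol.

End MinkowskiFrame.

(** * From coordinates to an orthonormal frame *)

Section Coordinates.
Variables (C : numClosedFieldType) (g E F : 'M[C]_4).
Local Notation h := (ginv g).

Lemma col_raise (x : 'I_4 -> C) : col (raise g x) = h *m col x.
Proof. by apply/matrixP => a j; rewrite !mxE; apply: eq_bigr => b _; rewrite mxE. Qed.

Lemma dot_col (x y : 'I_4 -> C) : dot g x y = ((col x)^T *m (h *m col y)) 0 0.
Proof. by rewrite mxE; apply: eq_bigr => a _; rewrite -col_raise !mxE. Qed.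

Lemma col_uvec (p : 'I_4 -> C) : col (uvec g F p) = F *m (h *m col p).
Proof.
rewrite -col_raise; apply/matrixP => a j; rewrite !mxE.
by apply: eq_bigr => b _; rewrite mxE.
Qed.

Lemma col_vvec (p : 'I_4 -> C) :
  col (vvec g E F p) = \matrix_(a, b) Fdual g E F a b *m (h *m col p).
Proof.
rewrite -col_raise; apply/matrixP => a j; rewrite !mxE.
by apply: eq_bigr => b _; rewrite !mxE.
Qed.

Lemma Fup_mx : \matrix_(a, b) Fup g F a b = h *m F *m h^T.
Proof. by apply/matrixP => a b; rewrite mxE mulmx_conjE. Qed.

Lemma Fdual_mx :
  \matrix_(a, b) Fdual g E F a b = (\det E)^-1 *: levi_dual (h *m F *m h^T).
Proof.
apply/matrixP => a b; rewrite !mxE -Fup_mx mulrCA; congr (_ * _).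
rewrite big_distrr; apply: eq_bigr => c _; rewrite big_distrr.
by apply: eq_bigr => d _; rewrite /eps !mxE /=; ring.
Qed.

Lemma Finv_tr : Finv g F = 2^-1 * \tr (F^T *m (h *m F *m h^T)).
Proof.
rewrite /Finv -sum_mul_tr -Fup_mx; congr (_ * _).
by apply: eq_bigr => a _; apply: eq_bigr => b _; rewrite mxE.
Qed.

Lemma Ginv_tr :
  Ginv g E F = - 4^-1 * \tr (F^T *m (h *m \matrix_(a, b) Fdual g E F a b *m h^T)).
Proof.
rewrite /Ginv -sum_mul_tr; congr (_ * _); apply: eq_bigr => a _; apply: eq_bigr => b _.
rewrite mulmx_conjE; congr (_ * _).
by apply: eq_bigr => c _; apply: eq_bigr => d _; rewrite mxE.
Qed.

Lemma dot_eq0 (p : 'I_4 -> C) :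
  col p = 0 -> dot g p p = 0 /\ dot g (uvec g F p) (uvec g F p) = 0.
Proof. by move=> p0; rewrite !dot_col col_uvec p0 !mulmx0 !mxE. Qed.

Lemma Mmat_Mcal (LF LFF LFG LGG : C) (p : 'I_4 -> C) : h^T = h ->
  Mmat g E F LF LFF LFG LGG p
  = Mcal LF LFF LFG LGG h (dot g p p) (col p) (col (uvec g F p)) (col (vvec g E F p)).
Proof.
move=> h_sym; have outer (x y : 'I_4 -> C) :
    col x *m (col y)^T *m h = col x *m (col (raise g y))^T.
  by rewrite col_raise -mulmxA -{1}h_sym -trmx_mul.
rewrite /Mcal /Mcal_outer !(mulmxDl, mulmxBl, mulNmx) -!scalemxAl mulmxDl !outer.
by apply/matrixP => b d; rewrite !mxE !big_ord1 !mxE; ring.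
Qed.

End Coordinates.

Section Frame.
Variables (C : numClosedFieldType) (g E : 'M[C]_4).
Hypothesis frame : E^T *m g *m E = eta4 C.
Local Notation eta := (eta4 C).
Local Notation h := (ginv g).

Lemma det_frame_neq0 : \det E != 0.
Proof.
apply/eqP => dE0; move/(congr1 determinant): frame.
rewrite !det_mulmx det_tr dE0 mulr0 det_eta4 => /eqP.
by rewrite eq_sym oppr_eq0 oner_eq0.
Qed.

Lemma metric_unit : g \in unitmx.
Proof.
rewrite unitmxE unitfE; apply/eqP => dg0; move/(congr1 determinant): frame.
by rewrite !det_mulmx dg0 mulr0 mul0r det_eta4 => /eqP; rewrite eq_sym oppr_eq0 oner_eq0.
Qed.

Lemma frame_unit : E^T \in unitmx.
Proof. by rewrite unitmx_tr unitmxE unitfE det_frame_neq0. Qed.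

Lemma ginv_frame : h = E *m eta *m E^T.
Proof.
have gE : g *m E = invmx E^T *m eta by rewrite -frame -!mulmxA mulKmx // frame_unit.
have g_inv : g *m (E *m eta *m E^T) = 1%:M.
  rewrite !mulmxA gE -[_ *m eta *m eta]mulmxA mulmx_eta4_eta4 mulmx1.
  by rewrite mulVmx // frame_unit.
by rewrite /ginv -[invmx g]mulmx1 -g_inv mulKmx // metric_unit.
Qed.

Lemma trmx_ginv : h^T = h.
Proof. by rewrite ginv_frame !trmx_mul trmxK trmx_eta4 mulmxA. Qed.

Lemma frame_form (x y : 'cV[C]_4) :
  x^T *m (h *m y) = (E^T *m x)^T *m (eta *m (E^T *m y)).
Proof. by rewrite ginv_frame trmx_mul trmxK !mulmxA. Qed.

Lemma frame_trace (X Y : 'M[C]_4) :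
  \tr (X^T *m (h *m Y *m h^T))
  = \tr ((E^T *m X *m E)^T *m (eta *m (E^T *m Y *m E) *m eta)).
Proof.
rewrite trmx_ginv ginv_frame !trmx_mul trmxK !mulmxA.
by rewrite mxtrace_mulC !mulmxA.
Qed.

Lemma frame_Fdual (F : 'M[C]_4) :
  E^T *m \matrix_(a, b) Fdual g E F a b *m E = hodge (E^T *m F *m E).
Proof.
rewrite Fdual_mx trmx_ginv ginv_frame -scalemxAr -scalemxAl.
rewrite (_ : E *m eta *m E^T *m F *m (E *m eta *m E^T)
           = E *m (eta *m (E^T *m F *m E) *m eta) *m E^T); last by rewrite !mulmxA.
by rewrite levi_dual_conj scalerA mulVf ?det_frame_neq0 // scale1r.
Qed.

Section Field.
Variables (F : 'M[C]_4) (p : 'I_4 -> C).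
Hypothesis F_anti : F^T = - F.
Local Notation u := (uvec g F p).

Lemma adj_Mmat (LF LFF LFG LGG : C) :
  \adj (Mmat g E F LF LFF LFG LGG p)
  = (- 8 * LF * Qc LF LFF LFG LGG (Finv g F) (Ginv g E F) (dot g p p) (dot g u u))
    *: (col p *m (col (raise g p))^T).
Proof.
set X := E^T *m F *m E; set q := E^T *m col p.
have X_anti : X^T = - X by rewrite /X !trmx_mul trmxK F_anti mulNmx mulmxN mulmxA.
have u_frame : E^T *m col u = X *m eta *m q by rewrite col_uvec ginv_frame !mulmxA.
have v_frame : E^T *m col (vvec g E F p) = hodge X *m eta *m q.
  by rewrite col_vvec -frame_Fdual ginv_frame !mulmxA.
(* The frame identity for the components of X and q, folded back into X and q
   and then into the coordinate quantities. *)
have := adj_Mcal_frame LF LFF LFG LGG (X 0 1) (X 0 2) (X 0 3) (X 1 2) (X 1 3) (X 2 3)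
  (q 0 0) (q 1 0) (q 2 0) (q 3 0).
rewrite -(asym4_entries X_anti) -col_vec4 /= -u_frame -v_frame.
rewrite -!frame_form -!dot_col -frame_Fdual -!frame_trace -Ginv_tr -Finv_tr => adj_frame.
rewrite Mmat_Mcal ?trmx_ginv // ginv_frame Mcal_conj ?frame_unit //.
rewrite adj_conj ?frame_unit // adj_frame -scalemxAr -scalemxAl.
rewrite /q col_raise ginv_frame !trmx_mul trmx_eta4.
by rewrite !mulmxA mulVmx ?frame_unit // mul1mx.
Qed.

Lemma optical_dot (sig : C) : optical g F sig p = dot g p p + sig * dot g u u.
Proof.
have gh : h *m g^T = 1%:M.
  by rewrite -[h]trmx_ginv -trmx_mul /ginv mulmxV ?trmx1 ?metric_unit.
have K_mx : \matrix_(b, c) (\sum_d Fup g F b d * \sum_e Fup g F c e * g e d)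
            = h *m F *m h *m F^T *m h.
  transitivity ((h *m F *m h^T) *m (h *m F *m h^T *m g)^T).
    apply/matrixP => b c; rewrite !mxE; apply: eq_bigr => d _.
    rewrite -Fup_mx !mxE; congr (_ * _).
    by apply: eq_bigr => e _; rewrite !mxE.
  by rewrite !trmx_mul !trmxK trmx_ginv !mulmxA -[_ *m g^T]mulmxA gh mulmx1.
transitivity (\sum_b \sum_c (h + sig *: (h *m F *m h *m F^T *m h)) b c * p b * p c).
  by apply: eq_bigr => b _; apply: eq_bigr => c _; rewrite -K_mx !mxE.
rewrite quad_form mulmxDl mulmxDr -scalemxAl -scalemxAr mxE [X in _ + X]mxE -dot_col.
congr (_ + _ * _); rewrite dot_col col_uvec !trmx_mul F_anti trmx_ginv.
by rewrite !(mulNmx, mulmxN) !mulmxA.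
Qed.

End Field.

End Frame.

Lemma sigma_mul (C : numClosedFieldType) (m n P x y : C) : m != 0 ->
  (x + sigma true m n P * y) * (x + sigma false m n P * y)
  = (m * x ^+ 2 + n * x * y + P * y ^+ 2) / m.
Proof.
move=> m0; have two : (2 : C) != 0 by rewrite pnatr_eq0.
have four : (4 : C) != 0 by rewrite pnatr_eq0.
rewrite /sigma; set s := sqrtC _.
have s2 : s ^+ 2 = n ^+ 2 / (4 * m ^+ 2) - P / m by rewrite sqrtCK.
transitivity ((x + n / (2 * m) * y) ^+ 2 - s ^+ 2 * y ^+ 2); first by ring.
by rewrite s2; field.
Qed.

Theorem mainTheorem3 (C : numClosedFieldType)
    (g E F : 'M[C]_4) (p : 'I_4 -> C) (LF LFF LFG LGG : C)
    (g_real : g \is a mxOver Num.real) (E_real : E \is a mxOver Num.real)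
    (F_real : F \is a mxOver Num.real) (p_real : forall a, p a \is Num.real)
    (LF_real : LF \is Num.real) (LFF_real : LFF \is Num.real)
    (LFG_real : LFG \is Num.real) (LGG_real : LGG \is Num.real)
    (g_sym : g^T = g)
    (g_lorentz : E^T *m g *m E = eta4 C)
    (F_anti : F^T = - F) :
  let Fv := Finv g F in
  let Gv := Ginv g E F in
  let P := Pc LFF LFG LGG in
  let M := Mc LF LFF LFG LGG Fv Gv in
  let N := Nc LF LFF LFG LGG Fv in
  let u := uvec g F p in
  let pp := dot g p p in
  let uu := dot g u u in
  let Mm := Mmat g E F LF LFF LFG LGG p in
  let Q := M * pp ^+ 2 + N * pp * uu + P * uu ^+ 2 in
  (forall b a : 'I_4, \adj Mm b a = - 8 * LF * Q * p b * raise g p a)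
  /\ ((2 <= \rank (kermx Mm^T))%N <-> LF * Q = 0)
  /\ (LF != 0 -> M != 0 ->
        (LF * Q = 0 <->
         optical g F (sigma true M N P) p * optical g F (sigma false M N P) p
           = 0)).
Proof.
move=> Fv Gv P M N u pp uu Mm Q.
have adjE : \adj Mm = (- 8 * LF * Q) *: (col p *m (col (raise g p))^T).
  exact: adj_Mmat.
split; first by move=> b a; rewrite adjE !mxE big_ord1 !mxE !mulrA.
split.
  rewrite kermx_tr_rank_adj adjE scalemx_eq0 outer_eq0 col_raise.
  have [p0 | p_neq0] := eqVneq (col p) 0.
    have [pp0 uu0] := dot_eq0 g F p0.
    by rewrite /Q /pp /uu /u pp0 uu0 orTb orbT; split=> // _; ring.
  have -> : (ginv g *m col p == 0) = false.
    apply: contraNF p_neq0 => /eqP /(congr1 (mulmx g)).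
    by rewrite mulmxA /ginv mulmxV ?(metric_unit g_lorentz) // mul1mx mulmx0 => ->.
  by rewrite !orbF -mulrA mulf_eq0 oppr_eq0 pnatr_eq0 /=; split=> /eqP.
move=> LF0 M0; rewrite !(optical_dot g_lorentz p F_anti) sigma_mul // -/pp -/u -/uu -/Q.
split=> /eqP; rewrite mulf_eq0 ?(negbTE LF0) ?invr_eq0 ?(negbTE M0) ?orbF => /eqP ->.
  by rewrite mul0r.
by rewrite mulr0.
Qed.
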